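(* Let $G$ be a finite group such that every element of prime order of $\mathrm{V}(\mathbb{Z}G)$ is rationally conjugate to an element of $G$ (i.e. for each such $u$ there are $g\in G$ and a unit $x\in\mathbb{Q}G$ with $x^{-1}ux=g$). Let $R$ be a field of characteristic zero, let $G\to \mathrm{GL}(n,R)$ be an injective group homomorphism, and let $\tau:\mathbb{Q}G\to M_n(R)$ be its unique extension to a ring homomorphism. Let $K$ be the kernel of the group homomorphism $\tau|_{\mathrm{U}(\mathbb{Q}G)}:\mathrm{U}(\mathbb{Q}G)\to\mathrm{GL}(n,R)$. Then $K\cap\mathrm{V}(\mathbb{Z}G)$ is torsion-free.
   Context: $\mathrm{U}(\mathbb{Q}G)$ denotes the unit group of the rational group algebra $\mathbb{Q}G$, and $\mathrm{V}(\mathbb{Z}G)$ the group of units of augmentation $1$ in $\mathbb{Z}G$ (augmentation of $\sum_g z_g g$ being $\sum_g z_g$). *)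

From HB Require Import structures.
From mathcomp Require Import all_boot all_order all_algebra all_fingroup.
Set Implicit Arguments. Unset Strict Implicit. Unset Printing Implicit Defensive.
Import GRing.Theory Num.Theory.
Local Open Scope ring_scope.

(* The rational group algebra QG of a finite group gT, elements are
   finitely supported functions gT -> rat, i.e. a = \sum_g a(g) g. *)
Definition QG (gT : finGroupType) := {ffun gT -> rat}.

Section GroupAlgebra.
Variable gT : finGroupType.

Definition ga_of (g : gT) : QG gT := [ffun x => ((x == g)%:R : rat)].
Definition ga_one : QG gT := ga_of 1%g.
Definition ga_mul (a b : QG gT) : QG gT :=
  [ffun g => \sum_(h : gT) a h * b (h^-1 * g)%g].
Definition ga_pow (a : QG gT) (k : nat) : QG gT := iter k (ga_mul a) ga_one.

Definition ga_unit (a : QG gT) : Prop :=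
  exists b : QG gT, ga_mul a b = ga_one /\ ga_mul b a = ga_one.

Definition ga_integral (a : QG gT) : Prop :=
  forall g : gT, exists z : int, a g = z%:~R.

Definition augmentation (a : QG gT) : rat := \sum_(g : gT) a g.

Definition in_VZG (u : QG gT) : Prop :=
  [/\ ga_integral u, augmentation u = 1 &
      exists v : QG gT, [/\ ga_integral v, ga_mul u v = ga_one & ga_mul v u = ga_one]].

Definition ga_has_order (u : QG gT) (p : nat) : Prop :=
  (0 < p)%N /\ ga_pow u p = ga_one /\ forall k, (0 < k < p)%N -> ga_pow u k <> ga_one.

Definition rat_conj_to_G (u : QG gT) : Prop :=
  exists (g : gT) (x xi : QG gT),
    [/\ ga_mul x xi = ga_one, ga_mul xi x = ga_one &
        ga_mul (ga_mul xi u) x = ga_of g].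

(* the unique ring extension tau : QG -> M_n(R) of rho : G -> GL(n,R)
   (R of char 0, so Q embeds via ratr) *)
Definition ga_tau (R : fieldType) (n : nat) (rho : gT -> 'M[R]_n) (a : QG gT)
  : 'M[R]_n := \sum_(g : gT) (ratr (a g)) *: rho g.

End GroupAlgebra.
Arguments ga_one {gT}.

From HB Require Import structures.
From mathcomp Require Import all_boot all_order all_algebra all_fingroup.
Import GRing.Theory Num.Theory.
Local Open Scope ring_scope.

(* A torsion element u <> 1 of K :&: V(ZG) has a power v of prime order, which
   is still in K :&: V(ZG).  By hypothesis x^-1 v x = g for some g in G and
   some unit x of QG; applying tau gives rho g = tau(x)^-1 tau(v) tau(x) = 1,
   so g = 1 because rho is faithful, hence v = x g x^-1 = 1, contradicting
   the prime order of v. *)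

(* MathComp proves that ratr is a ring morphism only into numFieldTypes;
   into an arbitrary field this needs characteristic zero. *)
Section RatrChar0.
Context {R : fieldType} (HR : [pchar R] =i pred0).

Lemma intr_pchar0_eq0 (z : int) : (z%:~R == 0 :> R) = (z == 0).
Proof.
have natr_eq0 m : (m%:R == 0 :> R) = (m == 0)%N by move/pcharf0P: HR.
case: z => m; first exact: natr_eq0.
by rewrite NegzE mulrNz oppr_eq0 natr_eq0.
Qed.

Lemma ratr_frac (a b : int) : b != 0 ->
  @ratr R (a%:~R / b%:~R) = a%:~R / b%:~R.
Proof.
move=> b0; set x := _ / _.
have b0R : b%:~R != 0 :> R by rewrite intr_pchar0_eq0.
have d0R : (denq x)%:~R != 0 :> R by rewrite intr_pchar0_eq0 denq_neq0.
have cross : numq x * b = a * denq x.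
  apply: (@intr_inj rat); apply/eqP; rewrite !rmorphM /=.
  by rewrite -eqr_div ?intr_eq0 ?denq_neq0 // divq_num_den.
by apply/eqP; rewrite /ratr eqr_div // -!rmorphM cross.
Qed.

Lemma ratrD_pchar0 (x y : rat) : @ratr R (x + y) = ratr x + ratr y.
Proof.
rewrite -[x]divq_num_den -[y]divq_num_den addf_div ?intr_eq0 ?denq_neq0 //.
rewrite -!rmorphM -rmorphD ratr_frac ?mulf_neq0 ?denq_neq0 //.
by rewrite !ratr_frac ?denq_neq0 // addf_div ?intr_pchar0_eq0 ?denq_neq0 // !rmorphD !rmorphM.
Qed.

Lemma ratrM_pchar0 (x y : rat) : @ratr R (x * y) = ratr x * ratr y.
Proof.
rewrite -[x]divq_num_den -[y]divq_num_den mulf_div -!rmorphM.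
rewrite ratr_frac ?mulf_neq0 ?denq_neq0 //.
by rewrite !ratr_frac ?denq_neq0 // mulf_div !rmorphM.
Qed.

End RatrChar0.

Section GroupAlgebra.
Context {gT : finGroupType}.
Implicit Types (a b c u v x xi : QG gT) (g : gT).

Lemma ga_mul1l a : ga_mul ga_one a = a.
Proof.
apply/ffunP=> g; rewrite ffunE (bigD1 1%g) //= big1 => [|h /negbTE nh1].
  by rewrite ffunE eqxx mul1r invg1 mul1g addr0.
by rewrite ffunE nh1 mul0r.
Qed.

Lemma ga_mul1r a : ga_mul a ga_one = a.
Proof.
apply/ffunP=> g; rewrite ffunE (bigD1 g) //= big1 => [|h nhg].
  by rewrite ffunE mulVg eqxx mulr1 addr0.
by rewrite ffunE -eq_mulVg1 (negbTE nhg) mulr0.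
Qed.

Lemma ga_mulA a b c : ga_mul a (ga_mul b c) = ga_mul (ga_mul a b) c.
Proof.
apply/ffunP=> g; rewrite !ffunE.
under eq_bigr do rewrite ffunE big_distrr /=.
under [RHS]eq_bigr do rewrite ffunE big_distrl /=.
rewrite [RHS]exchange_big /=; apply: eq_bigr => h _.
rewrite [RHS](reindex_inj (mulgI h)) /=; apply: eq_bigr => k _.
by rewrite mulKg invMg -mulgA mulrA.
Qed.

Lemma ga_pow1 u : ga_pow u 1 = u.
Proof. exact: ga_mul1r. Qed.

Lemma ga_powD u i j : ga_pow u (i + j) = ga_mul (ga_pow u i) (ga_pow u j).
Proof.
elim: i => [|i IHi]; first by rewrite ga_mul1l.
by rewrite addSn /= IHi ga_mulA.
Qed.

Lemma ga_powSr u i : ga_pow u i.+1 = ga_mul (ga_pow u i) u.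
Proof. by rewrite -addn1 ga_powD ga_pow1. Qed.

Lemma ga_powM u i j : ga_pow u (i * j) = ga_pow (ga_pow u i) j.
Proof.
elim: j => [|j IHj]; first by rewrite muln0.
by rewrite mulnS ga_powD IHj.
Qed.

Lemma ga_pow_inv u v i :
  ga_mul u v = ga_one -> ga_mul (ga_pow u i) (ga_pow v i) = ga_one.
Proof.
move=> uv1; elim: i => [|i IHi]; first exact: ga_mul1l.
by rewrite ga_powSr /= ga_mulA -(ga_mulA _ u) uv1 ga_mul1r.
Qed.

Lemma ga_integral_one : ga_integral (ga_one : QG gT).
Proof. by move=> g; rewrite ffunE; exists (g == 1%g)%:Z. Qed.

Lemma ga_integral_mul a b :
  ga_integral a -> ga_integral b -> ga_integral (ga_mul a b).
Proof.
move=> Za Zb g; rewrite ffunE.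
apply: (big_ind (fun r : rat => exists z : int, r = z%:~R)).
- by exists 0.
- by move=> _ _ [z1 ->] [z2 ->]; exists (z1 + z2); rewrite rmorphD.
- move=> h _; have [z1 ->] := Za h; have [z2 ->] := Zb (h^-1 * g)%g.
  by exists (z1 * z2); rewrite rmorphM.
Qed.

Lemma ga_integral_pow u i : ga_integral u -> ga_integral (ga_pow u i).
Proof.
move=> Zu; elim: i => [|i IHi]; first exact: ga_integral_one.
exact: ga_integral_mul.
Qed.

Lemma augmentation_one : augmentation (ga_one : QG gT) = 1.
Proof.
rewrite /augmentation (bigD1 1%g) //= big1 => [|h /negbTE nh1].
  by rewrite ffunE eqxx addr0.
by rewrite ffunE nh1.
Qed.

Lemma augmentationM a b :
  augmentation (ga_mul a b) = augmentation a * augmentation b.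
Proof.
rewrite /augmentation; under eq_bigr do rewrite ffunE.
rewrite exchange_big big_distrl /=; apply: eq_bigr => h _.
rewrite big_distrr /= (reindex_inj (mulgI h)) /=.
by apply: eq_bigr => k _; rewrite mulKg.
Qed.

Lemma augmentation_pow u i :
  augmentation u = 1 -> augmentation (ga_pow u i) = 1.
Proof.
move=> u1; elim: i => [|i IHi]; first exact: augmentation_one.
by rewrite /= augmentationM u1 IHi mulr1.
Qed.

Lemma in_VZG_pow u i : in_VZG u -> in_VZG (ga_pow u i).
Proof.
move=> [Zu u1 [v [Zv uv1 vu1]]].
split; [exact: ga_integral_pow | exact: augmentation_pow |].
by exists (ga_pow v i); split; [exact: ga_integral_pow | exact: ga_pow_inv ..].
Qed.

Lemma ga_has_order_neq1 u p : (1 < p)%N -> ga_has_order u p -> u <> ga_one.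
Proof. by move=> p_gt1 [_ [_ /(_ 1%N)]]; rewrite ga_pow1 p_gt1; apply. Qed.

(* If d is the order of u and p a prime divisor of d, then u^(d/p) has order p. *)
Lemma ga_pow_prime_order u k : (0 < k)%N -> ga_pow u k = ga_one -> u <> ga_one ->
  exists m p, prime p /\ ga_has_order (ga_pow u m) p.
Proof.
move=> k_gt0 uk1 nu1.
have ex_exp : exists d, (0 < d)%N && (ga_pow u d == ga_one).
  by exists k; rewrite k_gt0 uk1 eqxx.
case: (ex_minnP ex_exp) => d /andP[d_gt0 /eqP ud1] d_min.
have d_gt1 : (1 < d)%N.
  rewrite ltn_neqAle d_gt0 andbT eq_sym; apply/eqP => d1; apply: nu1.
  by rewrite -[u]ga_pow1 -d1.
have p_pr := pdiv_prime d_gt1; set p := pdiv d in p_pr.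
have def_d : d = (d %/ p * p)%N by rewrite divnK ?pdiv_dvd.
exists (d %/ p)%N, p; split=> //; split; first exact: prime_gt0.
split; first by rewrite -ga_powM -def_d.
move=> j /andP[j_gt0 j_ltp] uj1.
have m_gt0 : (0 < d %/ p)%N by rewrite divn_gt0 ?prime_gt0 ?pdiv_leq.
have := d_min (d %/ p * j)%N; rewrite muln_gt0 m_gt0 j_gt0 ga_powM uj1 eqxx.
by rewrite {1}def_d leq_pmul2l // leqNgt j_ltp => /(_ isT).
Qed.

Lemma ga_conj_eq1 v x xi : ga_mul x xi = ga_one ->
  ga_mul (ga_mul xi v) x = ga_one -> v = ga_one.
Proof.
move=> xxi1 conj1.
have -> : v = ga_mul (ga_mul x (ga_mul (ga_mul xi v) x)) xi.
  by rewrite !ga_mulA xxi1 ga_mul1l -ga_mulA xxi1 ga_mul1r.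
by rewrite conj1 ga_mul1r xxi1.
Qed.

Section Representation.
Context {R : fieldType} {n : nat}.
Variable rho : gT -> 'M[R]_n.
Hypotheses (HR : [pchar R] =i pred0) (rho1 : rho 1%g = 1%:M)
  (rhoM : forall g h : gT, rho (g * h)%g = rho g *m rho h).

Lemma ga_tau_of g : ga_tau rho (ga_of g) = rho g.
Proof.
rewrite /ga_tau (bigD1 g) //= big1 => [|h /negbTE nhg].
  by rewrite ffunE eqxx ratr_nat scale1r addr0.
by rewrite ffunE nhg ratr_nat scale0r.
Qed.

Lemma ga_tau_one : ga_tau rho ga_one = 1%:M.
Proof. by rewrite ga_tau_of. Qed.

Lemma ga_tauM a b : ga_tau rho (ga_mul a b) = ga_tau rho a *m ga_tau rho b.
Proof.
rewrite /ga_tau mulmx_suml.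
under eq_bigr do rewrite ffunE (big_morph _ (ratrD_pchar0 HR) (ratr_nat _ 0)) scaler_suml.
rewrite exchange_big /=; apply: eq_bigr => h _.
rewrite mulmx_sumr (reindex_inj (mulgI h)) /=; apply: eq_bigr => k _.
by rewrite mulKg (ratrM_pchar0 HR) -scalerA rhoM -scalemxAl -scalemxAr.
Qed.

Lemma ga_tau_pow_eq1 u i : ga_tau rho u = 1%:M -> ga_tau rho (ga_pow u i) = 1%:M.
Proof.
move=> tau_u1; elim: i => [|i IHi]; first exact: ga_tau_one.
by rewrite /= ga_tauM tau_u1 IHi mul1mx.
Qed.

Hypothesis rho_inj : injective rho.

Lemma rat_conj_ker_eq1 v : rat_conj_to_G v -> ga_tau rho v = 1%:M -> v = ga_one.
Proof.
move=> [g [x [xi [xxi1 xix1 conj_g]]]] tau_v1.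
have g1 : g = 1%g.
  apply: rho_inj; rewrite rho1 -ga_tau_of -conj_g !ga_tauM tau_v1 mulmx1.
  by rewrite -ga_tauM xix1 ga_tau_one.
by apply: (ga_conj_eq1 _ _ _ xxi1); rewrite conj_g g1.
Qed.

End Representation.
End GroupAlgebra.

Theorem mainTheorem8 (gT : finGroupType)
  (HG : forall u : QG gT, in_VZG u ->
          (exists p : nat, prime p /\ ga_has_order u p) -> rat_conj_to_G u)
  (R : fieldType) (HR : [pchar R] =i pred0)
  (n : nat) (rho : gT -> 'M[R]_n)
  (rho1 : rho 1%g = 1%:M)
  (rhoM : forall g h : gT, rho (g * h)%g = rho g *m rho h)
  (rho_inj : injective rho) :
  forall (u : QG gT) (k : nat),
    ga_unit u -> ga_tau rho u = 1%:M ->        (* u in K *)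
    in_VZG u ->                                 (* u in V(ZG) *)
    (0 < k)%N -> ga_pow u k = ga_one ->         (* u has finite order *)
    u = ga_one.
Proof.
(* Being a unit of QG is already part of membership in V(ZG). *)
move=> u k _ tau_u1 Vu k_gt0 uk1.
have [//|/eqP nu1] := eqVneq u ga_one.
have [m [p [p_pr ord_v]]] := ga_pow_prime_order _ _ k_gt0 uk1 nu1.
have conj_v : rat_conj_to_G (ga_pow u m).
  by apply: HG; [exact: in_VZG_pow | exists p].
have tau_v1 : ga_tau rho (ga_pow u m) = 1%:M by exact: ga_tau_pow_eq1.
have v1 : ga_pow u m = ga_one by exact: rat_conj_ker_eq1 conj_v tau_v1.
by case: (ga_has_order_neq1 _ _ (prime_gt1 p_pr) ord_v).
Qed.
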